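(* For every natural number $n\geq 2$, the $n$-Split Interval $S_n(I)$ contains no subspace homeomorphic to $D_n(2^{\mathbb{N}})$, and $D_n(2^{\mathbb{N}})$ contains no subspace homeomorphic to $S_n(I)$.
   Context: Let $I=[0,1]$. For $n\geq 2$, $S_n(I)$ is the set $I\times\{0,\ldots,n-1\}$ with the topology in which the points $(x,i)$ with $i\in\{2,\ldots,n-1\}$ are isolated, a point $(x,0)$ with $x>0$ has basic neighbourhoods $\{(x,0)\}\cup\{(y,i): z_0<y<x,\ i\in\{0,\ldots,n-1\}\}$ for $z_0\in I$, $z_0<x$, a point $(x,1)$ with $x<1$ has basic neighbourhoods $\{(x,1)\}\cup\{(y,i): x<y<z_1,\ i\in\{0,\ldots,n-1\}\}$ for $z_1\in I$, $z_1>x$, and the points $(0,0)$ and $(1,1)$ are isolated. For $n\geq 2$ and a Hausdorff space $X$, the Alexandroff $n$-plicate $D_n(X)$ is the set $X\times\{0,\ldots,n-1\}$ with the topology in which the points $(x,i)$ with $i\in\{1,\ldots,n-1\}$ are isolated and a point $(x,0)$ has basic neighbourhoods $\mathscr{U}\times\{0,\ldots,n-1\}\setminus\{(x,i):1\leq i\leq n-1\}$, where $\mathscr{U}$ ranges over neighbourhoods of $x$ in $X$. $2^{\mathbb{N}}$ is the Cantor space. *)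

From HB Require Import structures.
From mathcomp Require Import all_boot all_order all_algebra.
From mathcomp Require Import boolp classical_sets reals.
Set Implicit Arguments. Unset Strict Implicit. Unset Printing Implicit Defensive.
Import Order.TTheory GRing.Theory Num.Theory.
Local Open Scope classical_set_scope.
Local Open Scope ring_scope.

Definition open_of {T : Type} (B : T -> set (set T)) (U : set T) : Prop :=
  forall x, U x -> exists N, B x N /\ N `<=` U.

Definition embedding {X Y : Type} (BX : X -> set (set X)) (BY : Y -> set (set Y))
  (f : X -> Y) : Prop :=
  injective f /\
  forall U : set X, open_of BX U <-> exists V, open_of BY V /\ U = f @^-1` V.

Definition unitI (R : realType) := {x : R | (0 <= x <= 1)%R}.

Definition Sn_base (R : realType) (n : nat) (p : unitI R * 'I_n)
  : set (set (unitI R * 'I_n)) :=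
  fun N =>
    let x := sval p.1 in let i := nat_of_ord p.2 in
    if (2 <= i)%N then N = [set p]
    else if i == 0%N then
      (if x == 0 then N = [set p]
       else exists z0 : unitI R, sval z0 < x /\
              N = [set p] `|` [set q | sval z0 < sval q.1 < x])
    else
      (if x == 1 then N = [set p]
       else exists z1 : unitI R, x < sval z1 /\
              N = [set p] `|` [set q | x < sval q.1 < sval z1]).

Definition cantor_base (x : nat -> bool) : set (set (nat -> bool)) :=
  fun N => exists k : nat, N = [set y | forall i, (i < k)%N -> y i = x i].

Definition Dn_base {X : Type} (BX : X -> set (set X)) (n : nat) (p : X * 'I_n)
  : set (set (X * 'I_n)) :=
  fun N =>
    if nat_of_ord p.2 == 0%N then
      exists U, BX p.1 U /\
        N = [set q | U q.1 /\ ~ (q.1 = p.1 /\ nat_of_ord q.2 <> 0%N)]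
    else N = [set p].

(* A point of S_n(I) is either isolated or has a neighbourhood base lying on
   one side of it: to its left at level 0, to its right at level 1.  A basic
   neighbourhood of (x, 0) in D_n(2^N) only constrains a finite prefix of x.
   Pulling these bases back along an embedding gives every point of an
   uncountable set -- 2^N, respectively the points (u, 1) with u < 1, which are
   not isolated and so land at level 0 of D_n(2^N) -- a countable code (a
   prefix length, the prefix and a level) such that two points with the same
   code lie on the neighbourhood side of each other, hence coincide. *)

From HB Require Import structures.
From mathcomp Require Import all_boot all_order all_algebra.
From mathcomp Require Import boolp classical_sets reals.
From mathcomp Require Import cardinality set_interval ereal measure lebesgue_measure.
Set Implicit Arguments. Unset Strict Implicit. Unset Printing Implicit Defensive.
Import Order.TTheory GRing.Theory Num.Theory.
Local Open Scope classical_set_scope.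
Local Open Scope ring_scope.

Lemma cantor_space_uncountable : ~ countable [set: nat -> bool].
Proof.
move=> /countable_injP[f injf].
pose d i := ~~ `[< exists x, f x = i /\ x i >].
suff : d (f d) = ~~ d (f d) by case: (d (f d)).
rewrite {1}/d; congr (~~ _); apply/asboolP/idP => [[x [fx xfd]] | dfd].
  by move: xfd; rewrite (_ : x = d) //; apply: injf; rewrite ?in_setT.
by exists d.
Qed.

Lemma itv01_uncountable (R : realType) : ~ countable [set` (`[0, 1[ : interval R)].
Proof.
move=> /countable_lebesgue_measure0.
rewrite lebesgue_measure_itv /= lte_fin ltr01 oppr0 adde0.
by move/eqP; rewrite onee_eq0.
Qed.

Lemma one_sided_cylinder_countable (A : Type) (C : countType) (D : set A)
    (h : A -> nat -> bool) (tag : A -> C) (below : A -> A -> Prop) :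
  (forall a, D a -> exists k, forall b, D b ->
     (forall i, (i < k)%N -> h b i = h a i) -> below a b) ->
  (forall a b, D a -> D b -> tag a = tag b -> below a b -> below b a -> a = b) ->
  countable D.
Proof.
move=> cylinder antisym.
have /choice[k kP] : forall a, exists k, D a -> forall b, D b ->
    (forall i, (i < k)%N -> h b i = h a i) -> below a b.
  move=> a; have [/cylinder[k ?]|] := pselect (D a); first by exists k.
  by exists 0%N.
apply/countable_injP; exists (fun a => pickle (k a, mkseq (h a) (k a), tag a)).
move=> a b /set_mem Da /set_mem Db /(pcan_inj (@pickleK _))[eq_k eq_h eq_tag].
have agree i : (i < k a)%N -> h b i = h a i.
  by move=> lt_ik; rewrite -(nth_mkseq false (h a) lt_ik) eq_h -eq_k nth_mkseq.
apply: antisym => //; first exact: kP a Da b Db agree.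
by apply: (kP b Db a Da) => i; rewrite -eq_k => /agree ->.
Qed.

Lemma ltn2_cases i : (i < 2)%N -> i = 0%N \/ i = 1%N.
Proof. by case: i => [|[|]]; auto. Qed.

Section SplitInterval.
Variables (R : realType) (n : nat).
Implicit Types (p q : unitI R * 'I_n) (a b : unitI R).

Definition unit0 : unitI R := exist _ 0 (introT andP (conj (lexx 0) ler01)).
Definition unit1 : unitI R := exist _ 1 (introT andP (conj ler01 (lexx 1))).

Definition strip (a b : R) : set (unitI R * 'I_n) := [set q | a < sval q.1 < b].

Definition on_side p q :=
  q = p \/ (nat_of_ord p.2 = 0%N /\ sval q.1 < sval p.1)
        \/ (nat_of_ord p.2 = 1%N /\ sval p.1 < sval q.1).

Lemma Sn_base_isolated q : (2 <= q.2)%N -> Sn_base q [set q].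
Proof. by move=> q2; rewrite /Sn_base /= q2. Qed.

Lemma Sn_base_left q a : nat_of_ord q.2 = 0%N -> sval a < sval q.1 ->
  Sn_base q ([set q] `|` strip (sval a) (sval q.1)).
Proof.
move=> q0 aq; rewrite /Sn_base /= q0 /= gt_eqF; last first.
  by apply: le_lt_trans aq; case/andP: (svalP a).
by exists a.
Qed.

Lemma Sn_base_right q b : nat_of_ord q.2 = 1%N -> sval q.1 < sval b ->
  Sn_base q ([set q] `|` strip (sval q.1) (sval b)).
Proof.
move=> q1 qb; rewrite /Sn_base /= q1 /= lt_eqF; last first.
  by case/andP: (svalP b) => _; exact: lt_le_trans qb.
by exists b.
Qed.

Lemma Sn_base_exists p : exists N, Sn_base p N.
Proof.
case: (leqP 2 p.2) => [p2|/ltn2_cases[p0|p1]].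
- by exists [set p]; apply: Sn_base_isolated.
- have [x0|x_neq0] := eqVneq (sval p.1) 0.
    by exists [set p]; rewrite /Sn_base /= p0 x0 !eqxx.
  eexists; apply: (Sn_base_left (a := unit0)) => //.
  by rewrite lt_def x_neq0; case/andP: (svalP p.1).
- have [x1|x_neq1] := eqVneq (sval p.1) 1.
    by exists [set p]; rewrite /Sn_base /= p1 x1 !eqxx.
  eexists; apply: (Sn_base_right (b := unit1)) => //.
  by rewrite lt_neqAle x_neq1; case/andP: (svalP p.1).
Qed.

Lemma Sn_base_shape p N : Sn_base p N ->
  N = [set p] \/ exists a b, N = [set p] `|` strip (sval a) (sval b).
Proof.
rewrite /Sn_base; case: ifP => _; first by left.
case: ifP => _; case: ifP => _; try by left.
- by move=> [z [_ ->]]; right; exists z, p.1.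
- by move=> [z [_ ->]]; right; exists p.1, z.
Qed.

Lemma Sn_base_center p N : Sn_base p N -> N p.
Proof. by case/Sn_base_shape => [|[a [b]]] ->; [|left]. Qed.

Lemma Sn_base_on_side p N q : Sn_base p N -> N q -> on_side p q.
Proof.
rewrite /Sn_base; case: ifP => p2; first by move=> -> ->; left.
case: ifP => p0; case: ifP => _; try by move=> -> ->; left.
- move=> [z [_ ->]] [->|/andP[_ qp]]; first by left.
  by right; left; split => //; apply/eqP.
- move=> [z [_ ->]] [->|/andP[pq _]]; first by left.
  right; right; split => //.
  by move: p2 p0; case: (nat_of_ord p.2) => [|[|]].
Qed.

Lemma on_side_antisym p q : nat_of_ord p.2 = nat_of_ord q.2 ->
  on_side p q -> on_side q p -> p = q.
Proof.
move=> same [<-//|[[p0 lt1]|[p1 lt1]]] [->//|[[q0 lt2]|[q1 lt2]]].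
- by move: (lt_trans lt1 lt2); rewrite ltxx.
- by move: p0; rewrite same q1.
- by move: p1; rewrite same q0.
- by move: (lt_trans lt1 lt2); rewrite ltxx.
Qed.

Lemma Sn_base_in_strip q a b : sval a < sval q.1 < sval b ->
  exists N, Sn_base q N /\ N `<=` strip (sval a) (sval b).
Proof.
move=> /andP[aq qb].
have sub (c d : R) : sval a <= c -> d <= sval b ->
    [set q] `|` strip c d `<=` strip (sval a) (sval b).
  move=> ac db r [->|/andP[cr rd]]; first by rewrite /strip /= aq qb.
  by rewrite /strip /= (le_lt_trans ac cr) (lt_le_trans rd db).
case: (leqP 2 q.2) => [q2|/ltn2_cases[q0|q1]].
- exists [set q]; split; first exact: Sn_base_isolated.
  by move=> r ->; rewrite /strip /= aq qb.
- by eexists; split; [exact: Sn_base_left q0 aq | apply: sub; rewrite // ltW].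
- by eexists; split; [exact: Sn_base_right q1 qb | apply: sub; rewrite // ltW].
Qed.

Lemma Sn_base_open p N : Sn_base p N -> open_of (@Sn_base R n) N.
Proof.
move=> baseN q Nq; have [->|q_neq_p] := pselect (q = p); first by exists N; split.
have [N1|[a [b Nab]]] := Sn_base_shape baseN; first by move: Nq; rewrite N1 => /q_neq_p.
move: Nq; rewrite Nab => -[//|qab].
have [M [baseM Mab]] := Sn_base_in_strip qab.
by exists M; split => // r /Mab; right.
Qed.

Lemma Sn_right_not_isolated u o : nat_of_ord o = 1%N -> sval u < 1 ->
  ~ open_of (@Sn_base R n) [set (u, o)].
Proof.
move=> o1 u1 open_u; have [N [baseN Nu]] := open_u (u, o) erefl.
move: baseN Nu; rewrite /Sn_base /= o1 (lt_eqF u1) => -[z [uz ->]] Nu.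
have [um mz] := midf_lt uz.
have m01 : 0 <= (sval u + sval z) / 2 <= 1.
  case/andP: (svalP u) => u0 _; case/andP: (svalP z) => _ z1.
  by rewrite (le_trans u0 (ltW um)) (le_trans (ltW mz) z1).
pose m : unitI R := exist (fun x => 0 <= x <= 1) _ m01.
have : [set (u, o)] (m, o) by apply: Nu; right; rewrite /= um mz.
by case=> /(congr1 sval) /= m_eq_u; move: um; rewrite m_eq_u ltxx.
Qed.

End SplitInterval.

Section Embedding.
Variables (X Y : Type) (BX : X -> set (set X)) (BY : Y -> set (set Y)) (f : X -> Y).
Hypothesis f_emb : embedding BX BY f.

Lemma embedding_open_preimage V : open_of BY V -> open_of BX (f @^-1` V).
Proof. by move=> openV; apply/(proj2 f_emb); exists V. Qed.

Lemma embedding_open_singleton x : open_of BY [set f x] -> open_of BX [set x].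
Proof.
move/embedding_open_preimage; congr open_of; apply/seteqP.
by split=> [y /(proj1 f_emb)|y ->].
Qed.

End Embedding.

Section Alexandroff.
Variables (X : Type) (BX : X -> set (set X)) (n : nat).

Lemma Dn_open_singleton p : nat_of_ord p.2 != 0%N ->
  open_of (Dn_base BX (n:=n)) [set p].
Proof.
by move=> p_neq0 q ->; exists [set p]; split => //; rewrite /Dn_base (negbTE p_neq0).
Qed.

Lemma Dn_open_level0 V p : open_of (Dn_base BX (n:=n)) V -> V p ->
  nat_of_ord p.2 = 0%N -> exists U, BX p.1 U /\ forall y, U y -> V (y, p.2).
Proof.
move=> openV Vp p0; have [M [baseM MV]] := openV p Vp.
move: baseM; rewrite /Dn_base p0 eqxx => -[U [BU M_def]].
exists U; split => // y Uy; apply: MV; rewrite M_def; split => //=.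
by rewrite p0 => -[].
Qed.

End Alexandroff.

Lemma Dn_cantor_cylinder n V (p : (nat -> bool) * 'I_n) :
  open_of (Dn_base cantor_base (n:=n)) V -> V p -> nat_of_ord p.2 = 0%N ->
  exists k, forall y, (forall i, (i < k)%N -> y i = p.1 i) -> V (y, p.2).
Proof. by move=> openV Vp /(Dn_open_level0 openV Vp)[_ [[k ->] UV]]; exists k. Qed.

Lemma no_embedding_Dn_cantor_Sn (R : realType) n (o : 'I_n) f :
  nat_of_ord o = 0%N -> ~ embedding (Dn_base cantor_base (n:=n)) (@Sn_base R n) f.
Proof.
move=> o0 f_emb; apply: cantor_space_uncountable.
apply: (one_sided_cylinder_countable (h := id)
  (tag := fun x => nat_of_ord (f (x, o)).2)
  (below := fun x y => on_side (f (x, o)) (f (y, o)))).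
- move=> x _; have [N baseN] := Sn_base_exists (f (x, o)).
  have [k cyl] := Dn_cantor_cylinder (embedding_open_preimage f_emb (Sn_base_open baseN))
    (Sn_base_center baseN) o0.
  by exists k => y _ /cyl /(Sn_base_on_side baseN).
- move=> x y _ _ same_level xy yx.
  by have [] := proj1 f_emb _ _ (on_side_antisym same_level xy yx).
Qed.

Lemma no_embedding_Sn_Dn_cantor (R : realType) n (o : 'I_n) g :
  nat_of_ord o = 1%N -> ~ embedding (@Sn_base R n) (Dn_base cantor_base (n:=n)) g.
Proof.
move=> o1 g_emb.
have level0 u : sval u < 1 -> nat_of_ord (g (u, o)).2 = 0%N.
  move=> u1; apply/eqP/negPn/negP => level_neq0.
  apply: (Sn_right_not_isolated o1 u1); apply: (embedding_open_singleton g_emb).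
  exact: Dn_open_singleton.
apply: (@itv01_uncountable R).
have -> : [set` (`[0, 1[ : interval R)] = sval @` [set u : unitI R | sval u < 1].
  apply/seteqP; split => [r|_ [u /= u1 <-]]; rewrite /= in_itv /=; last first.
    by case/andP: (svalP u) => -> _.
  case/andP => r0 r1; have r01 : 0 <= r <= 1 by rewrite r0 ltW.
  by exists (exist (fun x => 0 <= x <= 1) _ r01).
apply: sub_countable (card_image_le _ _) _.
apply: (one_sided_cylinder_countable (h := fun u => (g (u, o)).1)
  (tag := fun=> tt) (below := fun u v => sval u <= sval v)).
- move=> u /= u1; have baseN := @Sn_base_right R n (u, o) (unit1 R) o1 u1.
  have [V [openV N_def]] := (proj2 g_emb _).1 (Sn_base_open baseN).
  have Vu : V (g (u, o)) by move: (Sn_base_center baseN); rewrite N_def.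
  have [k cyl] := Dn_cantor_cylinder openV Vu (level0 u u1).
  exists k => v /= v1 /cyl.
  have -> : (g (u, o)).2 = (g (v, o)).2 by apply: val_inj; rewrite /= !level0.
  rewrite -surjective_pairing => Vv.
  have : (g @^-1` V) (v, o) by [].
  by rewrite -N_def => -[[->]|/andP[/ltW]].
- by move=> u v _ _ _ uv vu; apply: val_inj; apply/le_anti; rewrite uv vu.
Qed.

Theorem mainTheorem10 (R : realType) (n : nat) (hn : (2 <= n)%N) :
  ~ (exists f : (nat -> bool) * 'I_n -> unitI R * 'I_n,
       embedding (Dn_base cantor_base (n:=n)) (@Sn_base R n) f) /\
  ~ (exists g : unitI R * 'I_n -> (nat -> bool) * 'I_n,
       embedding (@Sn_base R n) (Dn_base cantor_base (n:=n)) g).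
Proof.
split=> [[f]|[g]].
- by apply: (@no_embedding_Dn_cantor_Sn R n (Ordinal (ltnW hn))).
- by apply: (@no_embedding_Sn_Dn_cantor R n (Ordinal hn)).
Qed.
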